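(* Let $\mathcal{Z}=\{z_1,\dots,z_K\}$ with counting measure, $P$ a probability on $\mathcal{Z}$, and for a fixed noise level $\sigma$ let $q_{\sigma\mid0}(\cdot\mid z_0)$ be a Markov kernel on $\mathcal{Z}$ such that the corrupted marginal $P_\sigma(z)=\sum_{z_0}P(z_0)q_{\sigma\mid0}(z\mid z_0)$ satisfies $P_\sigma(z_i)>0$ for all $i$. Let $(\omega_{ij})$ be a symmetric Markov kernel: $\omega_{ij}=\omega_{ji}\ge0$, $\sum_j\omega_{ij}=1$, and write $\omega(\cdot\mid z_i)=(\omega_{ij})_j$. Define, for $g:\mathcal{Z}\to\mathbb{R}$, $$\mathcal{L}_\sigma(g)=\mathbb{E}_{z_0\sim P}\,\mathbb{E}_{z_\sigma\sim q_{\sigma\mid0}(\cdot\mid z_0)}\,\mathbb{E}_{\tilde z\sim\omega(\cdot\mid z_\sigma)}\left[\tanh\!\left(\frac{g(z_\sigma)-g(\tilde z)}{2}\right)-1\right]^2.$$ Then $\mathcal{L}_\sigma(g)=\sum_{i,j}P_\sigma(z_i)\omega_{ij}\left[\tanh\!\left(\frac{g(z_i)-g(z_j)}{2}\right)-1\right]^2$, and $g$ minimizes $\mathcal{L}_\sigma$ over all functions $\mathcal{Z}\to\mathbb{R}$ if and only if $g(z_i)-\log P_\sigma(z_i)$ is constant on each connected component of the graph on $\{1,\dots,K\}$ with edges $\{i,j\}$, $i\ne j$, for which $\omega_{ij}>0$. *)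

From mathcomp Require Import all_boot all_order all_algebra.
From mathcomp Require Import all_classical all_reals all_analysis.
Set Implicit Arguments. Unset Strict Implicit. Unset Printing Implicit Defensive.
Import Order.TTheory GRing.Theory Num.Theory.
Local Open Scope ring_scope.

(* The state space Z = {z_1,...,z_K} is modelled by the finite type 'I_K
   (z_i <-> index i).  Functions on Z are functions 'I_K -> R. *)

Definition tanh {R : realType} (x : R) : R :=
  (expR x - expR (- x)) / (expR x + expR (- x)).

Definition is_prob {R : realType} {K : nat} (P : 'I_K -> R) : Prop :=
  (forall z, 0 <= P z) /\ \sum_(z < K) P z = 1.

(* k is a Markov kernel on Z : k x y = k(y | x) *)
Definition is_markov_kernel {R : realType} {K : nat} (k : 'I_K -> 'I_K -> R)
  : Prop :=
  (forall x y, 0 <= k x y) /\ (forall x, \sum_(y < K) k x y = 1).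

Definition Psigma {R : realType} {K : nat} (P : 'I_K -> R)
  (q : 'I_K -> 'I_K -> R) (z : 'I_K) : R :=
  \sum_(z0 < K) P z0 * q z0 z.

Definition Lsigma {R : realType} {K : nat} (P : 'I_K -> R)
  (q : 'I_K -> 'I_K -> R) (omega : 'I_K -> 'I_K -> R) (g : 'I_K -> R) : R :=
  \sum_(z0 < K) P z0 *
    \sum_(zs < K) q z0 zs *
      \sum_(zt < K) omega zs zt *
        (tanh ((g zs - g zt) / 2) - 1) ^+ 2.

Definition omega_edge {R : realType} {K : nat} (omega : 'I_K -> 'I_K -> R)
  : rel 'I_K :=
  fun i j => (i != j) && (0 < omega i j).

From mathcomp Require Import all_boot all_order all_algebra.
From mathcomp Require Import all_classical all_reals all_analysis.
From mathcomp Require Import ring lra.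
Set Implicit Arguments. Unset Strict Implicit. Unset Printing Implicit Defensive.
Import Order.TTheory GRing.Theory Num.Theory.
Local Open Scope ring_scope.

(* With s_ij = e^{g_i} / (e^{g_i} + e^{g_j}) one has
   (tanh ((g_i - g_j)/2) - 1)^2 = 4 s_ji^2 and s_ij + s_ji = 1, so pairing the
   (i,j) and (j,i) terms of the loss (omega is symmetric) gives
     p_i (1 - s)^2 + p_j s^2 = p_i p_j / (p_i + p_j) + (p_i + p_j) (s - s0)^2,
   with s0 = p_i / (p_i + p_j).  Hence twice the loss is a constant plus a
   weighted sum of squares, which vanishes exactly when s_ij = s0 on every edge,
   i.e. when g - log p takes equal values at the ends of every edge. *)

Definition expR_share {R : realType} (a b : R) : R := expR a / (expR a + expR b).

Section ExpRShare.
Variable R : realType.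
Implicit Types a b c d : R.

Lemma expR_share_sym a b : expR_share a b + expR_share b a = 1.
Proof.
rewrite /expR_share [expR b + _]addrC -mulrDl divff //.
by rewrite gt_eqF // addr_gt0 ?expR_gt0.
Qed.

Lemma tanh_sub_sqr a b :
  (tanh ((a - b) / 2) - 1) ^+ 2 = 4 * expR_share b a ^+ 2.
Proof.
have ha : expR a = expR ((a - b) / 2) * expR ((a + b) / 2).
  by rewrite -expRD; congr expR; field.
have hb : expR b = expR (- ((a - b) / 2)) * expR ((a + b) / 2).
  by rewrite -expRD; congr expR; field.
rewrite /tanh /expR_share ha hb.
move: (expR_gt0 ((a - b) / 2)) (expR_gt0 (- ((a - b) / 2))) (expR_gt0 ((a + b) / 2)).
set e := expR _; set f := expR _; set m := expR _ => e0 f0 m0.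
have ef0 : e + f != 0 by rewrite gt_eqF // addr_gt0.
have fm0 : f * m + e * m != 0 by rewrite gt_eqF // addr_gt0 // mulr_gt0.
by field; rewrite ef0 fm0.
Qed.

Lemma expR_share_ln (pi pj : R) : 0 < pi -> 0 < pj ->
  expR_share (ln pi) (ln pj) = pi / (pi + pj).
Proof. by move=> pi0 pj0; rewrite /expR_share !lnK ?posrE. Qed.

Lemma expR_share_eq a b c d :
  (expR_share a b = expR_share c d) <-> (a - c = b - d).
Proof.
have den0 (x y : R) : expR x + expR y != 0 by rewrite gt_eqF // addr_gt0 ?expR_gt0.
suff E : (expR_share a b == expR_share c d) = (a - c == b - d).
  by split=> /eqP; [rewrite E | rewrite -E] => /eqP.
rewrite eqr_div ?den0 // !mulrDr [expR c * expR a]mulrC (inj_eq (addrI _)).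
rewrite -!expRD (inj_eq (@expR_inj R)) -subr_eq0 -[in RHS]subr_eq0.
by have -> : a - c - (b - d) = a + d - (c + b) by ring.
Qed.

End ExpRShare.

Lemma pair_sqr_decomp (F : fieldType) (pi pj s t : F) :
  pi + pj != 0 -> s + t = 1 ->
  pi * t ^+ 2 + pj * s ^+ 2 =
    pi * pj / (pi + pj) + (pi + pj) * (s - pi / (pi + pj)) ^+ 2.
Proof.
move=> pij0 st1; have -> : t = 1 - s by rewrite -st1 addrC addKr.
by field.
Qed.

Lemma connect_invariant (T : finType) (U : eqType) (e : rel T) (h : T -> U) :
  (forall x y, e x y -> h x = h y) -> forall x y, connect e x y -> h x = h y.
Proof.
move=> he x y.
have cl : fingraph.closed e [pred z | h z == h x] by move=> u v /he; rewrite !inE => ->.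
by move=> /(closed_connect cl); rewrite !inE eqxx => /esym /eqP.
Qed.

Section PairLoss.
Variables (R : realType) (K : nat) (p : 'I_K -> R) (omega : 'I_K -> 'I_K -> R).
Hypotheses (p_gt0 : forall i, 0 < p i) (omega_ge0 : forall i j, 0 <= omega i j)
  (omega_sym : forall i j, omega i j = omega j i).

Definition pair_loss (g : 'I_K -> R) : R :=
  \sum_(i < K) \sum_(j < K) p i * omega i j * (tanh ((g i - g j) / 2) - 1) ^+ 2.

Definition pair_loss_min : R :=
  \sum_(i < K) \sum_(j < K) omega i j * (2 * (p i * p j / (p i + p j))).

Definition share_gap (g : 'I_K -> R) (i j : 'I_K) : R :=
  (p i + p j) * (expR_share (g i) (g j) - expR_share (ln (p i)) (ln (p j))) ^+ 2.

Definition share_deviation (g : 'I_K -> R) : R :=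
  \sum_(i < K) \sum_(j < K) omega i j * share_gap g i j.

Let pij_neq0 i j : p i + p j != 0.
Proof. by rewrite gt_eqF // addr_gt0. Qed.

Lemma pair_loss_decomp g :
  pair_loss g = pair_loss_min + 2 * share_deviation g.
Proof.
suff E : pair_loss g + pair_loss g =
    \sum_(i < K) \sum_(j < K) (omega i j * (4 * (p i * p j / (p i + p j))) +
                               4 * (omega i j * share_gap g i j)).
  suff : pair_loss g + pair_loss g = 2 * pair_loss_min + 4 * share_deviation g.
    by lra.
  rewrite E /pair_loss_min /share_deviation !big_distrr -big_split /=.
  apply: eq_bigr => i _; rewrite !big_distrr -big_split /=.
  by apply: eq_bigr => j _; ring.
rewrite {2}/pair_loss exchange_big -big_split /=; apply: eq_bigr => i _.
rewrite -big_split /=; apply: eq_bigr => j _.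
rewrite (omega_sym j i) !tanh_sub_sqr /share_gap expR_share_ln //.
transitivity (4 * omega i j * (p i * expR_share (g j) (g i) ^+ 2 +
                               p j * expR_share (g i) (g j) ^+ 2)); first ring.
by rewrite pair_sqr_decomp // ?expR_share_sym //; ring.
Qed.

Lemma share_gap_ge0 g i j : 0 <= share_gap g i j.
Proof. by rewrite mulr_ge0 ?sqr_ge0 // ltW // addr_gt0. Qed.

Lemma share_deviation_ge0 g : 0 <= share_deviation g.
Proof. by do 2!(apply: sumr_ge0 => ? _); rewrite mulr_ge0 ?share_gap_ge0. Qed.

Lemma share_deviation_eq0 g :
  share_deviation g = 0 <->
  (forall i j, 0 < omega i j -> g i - ln (p i) = g j - ln (p j)).
Proof.
have gap0 i j : share_gap g i j = 0 <-> g i - ln (p i) = g j - ln (p j).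
  rewrite /share_gap -expR_share_eq; split => [/eqP|->].
    by rewrite mulf_eq0 (negPf (pij_neq0 i j)) sqrf_eq0 subr_eq0 => /eqP.
  by rewrite subrr expr0n mulr0.
rewrite /share_deviation pair_bigA /=; split => [sum0 i j omega_ij_gt0|gap_eq].
  apply/gap0; have /eqP : omega i j * share_gap g i j = 0.
    apply: (psumr_eq0P _ sum0 (i := (i, j))) => // -[i' j'] _.
    by rewrite mulr_ge0 ?share_gap_ge0.
  by rewrite mulf_eq0 (gt_eqF omega_ij_gt0) => /eqP.
apply: big1 => -[i j] _ /=.
have := omega_ge0 i j; rewrite le_eqVlt => /predU1P [<-|omega_ij_gt0].
  by rewrite mul0r.
by rewrite (proj2 (gap0 i j) (gap_eq i j omega_ij_gt0)) mulr0.
Qed.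

Lemma pair_loss_minP g :
  (forall h, pair_loss g <= pair_loss h) <->
  (forall i j, 0 < omega i j -> g i - ln (p i) = g j - ln (p j)).
Proof.
rewrite -share_deviation_eq0; split => [g_min | dev0 h].
  have ln_dev0 : share_deviation (fun i => ln (p i)) = 0.
    by apply/share_deviation_eq0 => i j _ /=; rewrite !subrr.
  have := g_min (fun i => ln (p i)); rewrite !pair_loss_decomp ln_dev0.
  by have := share_deviation_ge0 g; lra.
by rewrite !pair_loss_decomp dev0; have := share_deviation_ge0 h; lra.
Qed.

End PairLoss.

Lemma Lsigma_pair_sum (R : realType) (K : nat) (P : 'I_K -> R)
    (q omega : 'I_K -> 'I_K -> R) (g : 'I_K -> R) :
  Lsigma P q omega g =
    \sum_(i < K) \sum_(j < K)
      Psigma P q i * omega i j * (tanh ((g i - g j) / 2) - 1) ^+ 2.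
Proof.
rewrite /Lsigma; under eq_bigr do rewrite big_distrr.
rewrite exchange_big /=; apply: eq_bigr => i _.
under eq_bigr do rewrite mulrA.
rewrite -big_distrl /=; under [RHS]eq_bigr do rewrite -mulrA.
by rewrite -big_distrr.
Qed.

Theorem mainTheorem8 (R : realType) (K : nat)
  (P : 'I_K -> R) (q : 'I_K -> 'I_K -> R) (omega : 'I_K -> 'I_K -> R)
  (hP : is_prob P) (hq : is_markov_kernel q)
  (hPs : forall i, 0 < Psigma P q i)
  (hom : is_markov_kernel omega)
  (hsym : forall i j, omega i j = omega j i) :
  (forall g : 'I_K -> R,
     Lsigma P q omega g =
       \sum_(i < K) \sum_(j < K)
         Psigma P q i * omega i j * (tanh ((g i - g j) / 2) - 1) ^+ 2)
  /\
  (forall g : 'I_K -> R,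
     (forall h : 'I_K -> R, Lsigma P q omega g <= Lsigma P q omega h) <->
     (forall i j, connect (omega_edge omega) i j ->
        g i - ln (Psigma P q i) = g j - ln (Psigma P q j))).
Proof.
split=> [|g]; first exact: Lsigma_pair_sum.
have Lpair h : Lsigma P q omega h = pair_loss (Psigma P q) omega h.
  exact: Lsigma_pair_sum.
under eq_forall do rewrite !Lpair.
rewrite pair_loss_minP //; last exact: hom.1.
split=> [edge_eq | conn_eq i j omega_ij_gt0].
  by apply: connect_invariant => i j /andP [_ /edge_eq].
have [->|neq_ij] := eqVneq i j; first by [].
by apply: conn_eq; apply: connect1; rewrite /omega_edge neq_ij.
Qed.
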